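(* Let $\mathcal A$ be a set of graphs, let $\mathcal C$ be a class of connected graphs each of which is bridge-addable in $\mathcal A$, and let $R_n\in_u\mathcal A$. Then: (a) $\mathbb E[\operatorname{frag}(R_n,\mathcal C)]<2$ for each $n$ with $\mathcal A_n\ne\emptyset$; (b) for $a\in\mathbb N$, letting $\mathcal B$ be the set of graphs $G\in\mathcal A$ having a component $H\in\mathcal C$ with $a\le v(H)\le v(G)-a$, we have $\mathbb P(R_n\in\mathcal B)<2/a$ for all $n\ge 2a$ (with $\mathcal A_n\ne\emptyset$).
   Context: $\mathcal A_n$: graphs in $\mathcal A$ on vertex set $[n]$; $R_n\in_u\mathcal A$: uniform on $\mathcal A_n$. A connected graph $H$ is bridge-addable in $\mathcal A$ if whenever $G\in\mathcal A$ has a component isomorphic to $H$ and $e$ is a non-edge between that component and the rest of $G$, $G+e\in\mathcal A$. $\operatorname{Frag}(G)$ is obtained from $G$ by deleting a largest component (ties broken arbitrarily); $\operatorname{frag}(G,\mathcal C)$ is the number of vertices in the components of $\operatorname{Frag}(G)$ that are in $\mathcal C$. *)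

From mathcomp Require Export all_boot all_order all_algebra.
Set Implicit Arguments. Unset Strict Implicit. Unset Printing Implicit Defensive.

(* A (labelled) graph on vertex set [n] = 'I_n is given by its set of ordered
   pairs of adjacent vertices; it is a simple graph when this relation is
   irreflexive and symmetric. *)
Notation graph n := {set 'I_n * 'I_n}.

Definition is_sgraph n (G : graph n) : bool :=
  [forall x, (x, x) \notin G] && [forall x, forall y, ((x, y) \in G) == ((y, x) \in G)].

Definition gedge n (G : graph n) : rel 'I_n := fun x y => (x, y) \in G.

Definition gconnected n (G : graph n) : bool :=
  [forall x, forall y, connect (gedge G) x y].

Definition comps n (G : graph n) : {set {set 'I_n}} :=
  [set [set y | connect (gedge G) x y] | x : 'I_n].

Definition iso_comp n (G : graph n) (K : {set 'I_n}) k (H : graph k) : bool :=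
  [exists f : {ffun 'I_k -> 'I_n},
     [&& injectiveb f, f @: setT == K &
         [forall x, forall y, ((x, y) \in H) == ((f x, f y) \in G)]]].

Definition gclass := forall n, pred (graph n).

Definition comp_in (C : gclass) n (G : graph n) (K : {set 'I_n}) : bool :=
  [exists H : graph #|K|, C #|K| H && iso_comp G K H].

Definition An (A : gclass) n : {set graph n} := [set G | is_sgraph G && A n G].

Definition bridge_addable (A : gclass) k (H : graph k) : Prop :=
  forall n (G : graph n) (K : {set 'I_n}) (u v : 'I_n),
    G \in An A n -> K \in comps G -> iso_comp G K H -> u \in K -> v \notin K ->
    G :|: [set (u, v); (v, u)] \in An A n.

(* L is a tie-breaking rule selecting a largest component of each graph *)
Definition largest_selector (A : gclass) (L : forall n, graph n -> {set 'I_n}) : Prop :=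
  forall n (G : graph n), G \in An A n -> 0 < n ->
    L n G \in comps G /\ forall K, K \in comps G -> #|K| <= #|L n G|.

(* frag(G, C): vertices in components of Frag(G) (= G minus the component
   L n G) that are in C *)
Definition frag (C : gclass) (L : forall n, graph n -> {set 'I_n}) n (G : graph n) : nat :=
  \sum_(K in comps G | (K != L n G) && comp_in C G K) #|K|.

Definition inB (C : gclass) (a : nat) n (G : graph n) : bool :=
  [exists K in comps G, [&& comp_in C G K, a <= #|K| & #|K| <= n - a]].

From mathcomp Require Import all_boot all_order all_algebra.
From mathcomp Require Import zify.
Set Implicit Arguments. Unset Strict Implicit. Unset Printing Implicit Defensive.

(* Both parts of the theorem follow from one double-counting ("switching")
   argument.  Call a pair p = (u, v) a switch of G in the class X if u and v
   lie in different components of G and G + uv is again in X.  The map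
   (G, p) |-> (G + uv, p) is injective and lands on pairs (G', p) where p is
   an (ordered) bridge of G' in X.  A graph on n vertices has at most n - 1
   bridges, hence at most 2(n - 1) ordered ones: orienting every bridge away
   from the root of its component, distinct bridges get distinct heads and no
   head is a root.  So the switches of all graphs of X number at most
   2(n - 1) |X|.
   (a) Every vertex u of a fragment component in C yields at least n - |F|
       >= |F| switches (u, v), and every vertex u outside F at least |F|
       switches (u, v) with v in F, where F is the set of such vertices;
       hence n * frag(G) switches per graph and n * E[frag] <= 2(n - 1).
   (b) A component K in C with a <= |K| <= n - a yields the 2|K|(n - |K|)
       >= a n pairs crossing K as switches, hence a n P(B) <= 2(n - 1). *)

Definition symmetric_graph n (G : graph n) : Prop :=
  forall x y, ((x, y) \in G) = ((y, x) \in G).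

Definition edge_pair n (u v : 'I_n) : {set 'I_n * 'I_n} := [set (u, v); (v, u)].
Definition del_edge n (G : graph n) (u v : 'I_n) : graph n := G :\: edge_pair u v.
Definition add_edge n (G : graph n) (u v : 'I_n) : graph n := G :|: edge_pair u v.

Definition comp n (G : graph n) (x : 'I_n) : {set 'I_n} :=
  [set y | connect (gedge G) x y].

Definition bridges n (G : graph n) : {set 'I_n * 'I_n} :=
  [set p in G | ~~ connect (gedge (del_edge G p.1 p.2)) p.1 p.2].

Section Components.

Variable n : nat.
Implicit Types (G : graph n) (K : {set 'I_n}).

Lemma sgraph_sym G : is_sgraph G -> symmetric_graph G.
Proof. by case/andP=> _ /forallP sG x y; move/forallP: (sG x) => /(_ y) /eqP. Qed.

Lemma connect_symG G : symmetric_graph G -> connect_sym (gedge G).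
Proof. by move=> sG; apply: sym_connect_sym => x y; rewrite /gedge sG. Qed.

Lemma del_edge_sym G u v : symmetric_graph G -> symmetric_graph (del_edge G u v).
Proof.
move=> sG x y; rewrite !inE sG !xpair_eqE; congr (~~ _ && _).
by case: (x == u); case: (x == v); case: (y == u); case: (y == v).
Qed.

Lemma edge_pairC (u v : 'I_n) : edge_pair v u = edge_pair u v.
Proof. by rewrite /edge_pair setUC. Qed.

Lemma del_edgeC G u v : del_edge G v u = del_edge G u v.
Proof. by rewrite /del_edge edge_pairC. Qed.

Lemma add_edgeC G u v : add_edge G v u = add_edge G u v.
Proof. by rewrite /add_edge edge_pairC. Qed.

Lemma connect_subgraph G1 G2 x y :
  G1 \subset G2 -> connect (gedge G1) x y -> connect (gedge G2) x y.
Proof. by move=> sG12; apply: connect_sub => a b e; apply/connect1/(subsetP sG12). Qed.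

Lemma connect_del_edge G a b x y : symmetric_graph G ->
  connect (gedge G) x y ->
  [|| connect (gedge (del_edge G a b)) x y, connect (gedge (del_edge G a b)) x a
    | connect (gedge (del_edge G a b)) x b].
Proof.
move=> sG cxy; apply/negPn/negP; rewrite !negb_or => /and3P[nxy nxa nxb].
pose D := [set z | connect (gedge (del_edge G a b)) x z].
have closedD : closed (gedge G) D.
  move=> z1 z2 e12; rewrite !inE.
  case E: ((z1, z2) \in edge_pair a b).
    move: E; rewrite !inE !xpair_eqE.
    by case/orP=> /andP[/eqP-> /eqP->]; rewrite (negbTE nxa) (negbTE nxb).
  have e12' : gedge (del_edge G a b) z1 z2 by rewrite /gedge inE E.
  have e21' : gedge (del_edge G a b) z2 z1 by rewrite /gedge del_edge_sym.
  by apply/idP/idP => h; apply: connect_trans h _; apply: connect1.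
have := closed_connect closedD cxy; rewrite !inE connect0 => /esym.
by rewrite (negbTE nxy).
Qed.

Lemma comp_in_comps G x : comp G x \in comps G.
Proof. exact: imset_f. Qed.

Lemma comps_of G K x : symmetric_graph G -> K \in comps G -> x \in K -> K = comp G x.
Proof.
move=> sG /imsetP[y _ ->]; rewrite inE => cyx; apply/setP => z; rewrite !inE.
apply/idP/idP => h; last exact: connect_trans cyx h.
by apply: connect_trans h; rewrite connect_symG.
Qed.

Lemma comps_disj G K1 K2 z : symmetric_graph G -> K1 \in comps G -> K2 \in comps G ->
  z \in K1 -> z \in K2 -> K1 = K2.
Proof. by move=> sG k1 k2 z1 z2; rewrite (comps_of sG k1 z1) (comps_of sG k2 z2). Qed.

Definition cut K : {set 'I_n * 'I_n} := [set p | (p.1 \in K) != (p.2 \in K)].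

Lemma card_cut K : #|cut K| = 2 * (#|K| * #|~: K|).
Proof.
have -> : cut K = setX K (~: K) :|: setX (~: K) K.
  by apply/setP => -[x y]; rewrite !inE /=; case: (x \in K); case: (y \in K).
rewrite cardsU !cardsX [#|~: K| * _]mulnC addnn -mul2n.
suff -> : setX K (~: K) :&: setX (~: K) K = set0 by rewrite cards0 subn0.
by apply/setP => -[x y]; rewrite !inE /=; case: (x \in K); rewrite ?andbF.
Qed.

End Components.

(* a cut between parts of sizes k, m >= a has 2km >= a (k + m) ordered pairs *)
Lemma cut_size_bound a k m : a <= k -> a <= m -> a * (k + m) <= 2 * (k * m).
Proof. by move=> ak am; nia. Qed.

Section Bridges.

Variable n : nat.
Implicit Types (G : graph n) (p : 'I_n * 'I_n).

Local Notation root G := (fingraph.root (gedge G)).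

(* the endpoint of a bridge that is cut off from the root of its component
   when the bridge is deleted *)
Definition bridge_head G p : 'I_n :=
  if connect (gedge (del_edge G p.1 p.2)) (root G p.1) p.1 then p.2 else p.1.

Lemma bridge_headP G p : symmetric_graph G -> p \in bridges G ->
  let h := bridge_head G p in let r := root G h in
  exists t, [/\ (t, h) \in G, p = (t, h) \/ p = (h, t),
     connect (gedge (del_edge G t h)) r t &
     ~~ connect (gedge (del_edge G t h)) r h].
Proof.
move=> sG; case: p => u v; rewrite inE /= => /andP[e nc].
have cs := connect_symG sG; have csD := connect_symG (del_edge_sym u v sG).
have ruv : root G v = root G u by apply/esym/(fingraph.rootP cs)/connect1.
rewrite /bridge_head /=; case E: (connect _ _ u).
- exists u; split => //; [by left | by rewrite ruv |].
  by rewrite ruv; apply: contra nc => h; apply: connect_trans h; rewrite csD.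
- exists v; rewrite -sG del_edgeC; split => //; [by right | | by rewrite E].
  have cru : connect (gedge G) (root G u) u by rewrite cs connect_root.
  by case/or3P: (connect_del_edge u v sG cru) => h //; rewrite E in h.
Qed.

Lemma bridge_tail_unique G r t1 t2 w : symmetric_graph G ->
  (t1, w) \in G -> (t2, w) \in G ->
  connect (gedge (del_edge G t1 w)) r t1 -> ~~ connect (gedge (del_edge G t1 w)) r w ->
  connect (gedge (del_edge G t2 w)) r t2 -> ~~ connect (gedge (del_edge G t2 w)) r w ->
  t1 = t2.
Proof.
move=> sG e1 e2 c1 n1 c2 n2; case: (eqVneq t1 t2) => // ne; exfalso.
have ne2 : t2 != w by apply: contraNneq n2 => eq; rewrite -[X in connect _ _ X]eq.
have e21 : (t2, w) \in del_edge G t1 w.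
  by rewrite !inE !xpair_eqE e2 eqxx !andbT (negbTE ne2) eq_sym (negbTE ne).
have s1 : del_edge (del_edge G t2 w) t1 w \subset del_edge G t1 w.
  exact/setSD/subsetDl.
have s2 : del_edge (del_edge G t2 w) t1 w \subset del_edge G t2 w by apply: subsetDl.
case/or3P: (connect_del_edge t1 w (del_edge_sym t2 w sG) c2) => h.
- by case/negP: n1; apply: connect_trans (connect_subgraph s1 h) (connect1 e21).
- case/negP: n2; apply: connect_trans (connect_subgraph s2 h) (connect1 _).
  by rewrite /gedge !inE !xpair_eqE e1 (negbTE ne) [w == t2]eq_sym (negbTE ne2) !andbF.
- by case/negP: n2; apply: connect_subgraph s2 h.
Qed.

Lemma card_nonroots G : symmetric_graph G -> #|[set z | root G z != z]| <= n.-1.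
Proof.
case: n G => [|m] G sG; first by apply: leq_trans (max_card _) _; rewrite card_ord.
have sub : [set z | root G z != z] \subset [set~ root G ord0].
  apply/subsetP => z; rewrite !inE; apply: contra => /eqP ->.
  by rewrite root_root //; apply: connect_symG.
by apply: leq_trans (subset_leq_card sub) _; rewrite cardsC1 card_ord.
Qed.

(* a graph on n vertices has at most n - 1 bridges: bridges are determined
   by their head together with their orientation *)
Lemma card_bridges G : symmetric_graph G -> #|bridges G| <= 2 * (n - 1).
Proof.
move=> sG; pose code p := (bridge_head G p, (p.1 < p.2)%N).
have code_inj : {in bridges G &, injective code}.
  move=> p q bp bq [] eh el.
  have [t1 [e1 o1 c1 n1]] := bridge_headP sG bp.
  have [t2 [e2 o2 c2 n2]] := bridge_headP sG bq.
  rewrite -eh in e2 o2 c2 n2.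
  have tt := bridge_tail_unique sG e1 e2 c1 n1 c2 n2; subst t2.
  have ne : t1 != bridge_head G p.
    by apply: contraNneq n1 => eq; rewrite -[X in connect _ _ X]eq.
  move: el; case: o1 => ->; case: o2 => -> //= el; exfalso;
    by move: el ne; case: ltngtP => // /val_inj ->; rewrite eqxx.
have sub : code @: bridges G \subset setX [set z | root G z != z] setT.
  apply/subsetP => _ /imsetP[p bp ->]; rewrite !inE andbT /=.
  have [t [_ _ _]] := bridge_headP sG bp.
  by apply: contra => /eqP ->; apply: connect0.
rewrite -(card_in_imset code_inj); apply: leq_trans (subset_leq_card sub) _.
by rewrite cardsX cardsT card_bool mulnC subn1 leq_mul2l card_nonroots ?orbT.
Qed.

End Bridges.

Section Switching.

Variable n : nat.
Implicit Types (G : graph n) (X : {set graph n}) (p : 'I_n * 'I_n).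

Lemma sum_card_swap X (S : graph n -> {set 'I_n * 'I_n}) :
  \sum_(G in X) #|S G| = \sum_p #|[set G in X | p \in S G]|.
Proof.
under eq_bigr do rewrite -sum1_card big_mkcond /=.
rewrite exchange_big; apply: eq_bigr => p _.
rewrite big_mkcond -sum1_card [RHS]big_mkcond /=; apply: eq_bigr => G _.
by rewrite inE; case: (G \in X).
Qed.

Lemma del_add_edge G u v : symmetric_graph G -> ~~ connect (gedge G) u v ->
  del_edge (add_edge G u v) u v = G.
Proof.
move=> sG nc; have nuv : (u, v) \notin G by apply: contra nc => e; apply: connect1.
have nvu : (v, u) \notin G by rewrite sG.
rewrite /del_edge /add_edge setDUl setDv setU0; apply/setDidPl.
rewrite disjoint_sym disjoints_subset /edge_pair; apply/subsetP => z.
by rewrite !inE => /orP[]/eqP->.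
Qed.

Lemma add_edge_bridge G u v : symmetric_graph G -> ~~ connect (gedge G) u v ->
  (u, v) \in bridges (add_edge G u v).
Proof.
move=> sG nc; rewrite inE /= del_add_edge // nc andbT.
by rewrite /add_edge /edge_pair !inE eqxx orbT.
Qed.

Lemma switching_bound X (S : graph n -> {set 'I_n * 'I_n}) :
  (forall G, G \in X -> symmetric_graph G) ->
  (forall G p, G \in X -> p \in S G ->
     ~~ connect (gedge G) p.1 p.2 /\ add_edge G p.1 p.2 \in X) ->
  \sum_(G in X) #|S G| <= 2 * (n - 1) * #|X|.
Proof.
move=> symX switchX.
have per_pair p : #|[set G in X | p \in S G]| <= #|[set G in X | p \in bridges G]|.
  case: p => u v; pose add G := add_edge G u v.
  have add_inj : {in [set G in X | (u, v) \in S G] &, injective add}.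
    move=> G1 G2; rewrite !inE => /andP[X1 S1] /andP[X2 S2] e.
    have [/= nc1 _] := switchX _ _ X1 S1; have [/= nc2 _] := switchX _ _ X2 S2.
    rewrite -(del_add_edge (symX _ X1) nc1) -/(add G1) e.
    exact: del_add_edge (symX _ X2) nc2.
  rewrite -(card_in_imset add_inj); apply/subset_leq_card/subsetP => H /imsetP[G].
  rewrite inE => /andP[GX uvS] ->; have [/= nc addX] := switchX _ _ GX uvS.
  by rewrite inE addX (add_edge_bridge (symX _ GX) nc).
rewrite sum_card_swap.
apply: (@leq_trans (\sum_p #|[set G in X | p \in bridges G]|)); first exact: leq_sum.
rewrite -sum_card_swap mulnC -sum_nat_const; apply: leq_sum => G GX.
exact/card_bridges/symX.
Qed.

Lemma card_rows (S : {set 'I_n * 'I_n}) :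
  #|S| = \sum_(u : 'I_n) #|[set v | (u, v) \in S]|.
Proof.
under eq_bigr do rewrite -sum1_card big_mkcond /=.
rewrite pair_big -sum1_card big_mkcond /=.
by apply: eq_bigr => -[u v] _; rewrite inE.
Qed.

End Switching.

Section Switches.

Variables (A C : gclass) (L : forall n, graph n -> {set 'I_n}).
Hypothesis C_addable : forall k (H : graph k), C H -> bridge_addable A H.
Variable n : nat.
Implicit Types (G : graph n) (K : {set 'I_n}).

Lemma An_sym G : G \in An A n -> symmetric_graph G.
Proof. by rewrite inE => /andP[/sgraph_sym]. Qed.

Lemma add_edge_from_C G K u v : G \in An A n -> K \in comps G -> comp_in C G K ->
  u \in K -> v \notin K -> add_edge G u v \in An A n.
Proof.
by move=> GA KG /existsP[H /andP[CH iso]]; apply: C_addable CH n G K u v GA KG iso.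
Qed.

Lemma switch_from_C G K u v : G \in An A n -> K \in comps G -> comp_in C G K ->
  u \in K -> v \notin K -> ~~ connect (gedge G) u v /\ add_edge G u v \in An A n.
Proof.
move=> GA KG CK uK vK; split; last exact: add_edge_from_C CK uK vK.
by move: vK; rewrite (comps_of (An_sym GA) KG uK) inE.
Qed.

Definition frag_comps G : {set {set 'I_n}} :=
  [set K in comps G | (K != L G) && comp_in C G K].
Definition frag_set G : {set 'I_n} := cover (frag_comps G).

Lemma mem_frag_set G z : z \in frag_set G ->
  exists K, [/\ K \in comps G, K != L G, comp_in C G K & z \in K].
Proof. by case/bigcupP => K; rewrite inE => /andP[KG /andP[ne CK]] zK; exists K. Qed.

(* the components of G are disjoint, so frag(G) is the size of F(G) *)
Lemma frag_card G : symmetric_graph G -> frag C L G = #|frag_set G|.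
Proof.
move=> sG; have disj : trivIset (frag_comps G).
  apply/trivIsetP => K1 K2; rewrite !inE => /andP[K1G _] /andP[K2G _] ne.
  apply/pred0P => z /=; apply/negbTE/negP => /andP[z1 z2].
  by case/eqP: ne; apply: comps_disj sG K1G K2G z1 z2.
by rewrite /frag /frag_set -(eqP disj); apply: eq_bigl => K; rewrite inE.
Qed.

Lemma frag_set_closed G u v : symmetric_graph G ->
  v \in frag_set G -> connect (gedge G) u v -> u \in frag_set G.
Proof.
move=> sG /mem_frag_set[K [KG ne CK vK]] cuv; apply/bigcupP; exists K.
  by rewrite inE KG ne.
by rewrite (comps_of sG KG vK) inE connect_symG.
Qed.

Lemma frag_set_sub G : symmetric_graph G -> L G \in comps G ->
  frag_set G \subset ~: L G.
Proof.
move=> sG LG; apply/subsetP => z /mem_frag_set[K [KG ne _ zK]]; rewrite inE.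
by apply: contra ne => zL; rewrite (comps_disj sG KG LG zK zL).
Qed.

Definition frag_switches G : {set 'I_n * 'I_n} :=
  [set p | ~~ connect (gedge G) p.1 p.2 && ((p.1 \in frag_set G) || (p.2 \in frag_set G))].

Lemma frag_switchesP G p : G \in An A n -> p \in frag_switches G ->
  ~~ connect (gedge G) p.1 p.2 /\ add_edge G p.1 p.2 \in An A n.
Proof.
move=> GA; have sG := An_sym GA; case: p => u v; rewrite inE /=.
case/andP=> nc /orP[/mem_frag_set[K [KG _ CK uK]] | /mem_frag_set[K [KG _ CK vK]]].
  have vK : v \notin K by rewrite (comps_of sG KG uK) inE.
  exact: switch_from_C CK uK vK.
have uK : u \notin K by rewrite (comps_of sG KG vK) inE connect_symG.
by have [_] := switch_from_C GA KG CK vK uK; rewrite add_edgeC.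
Qed.

(* every vertex u is the first entry of at least |F(G)| switches: if u is in
   F(G), all v outside its component (which is no larger than L G) qualify;
   otherwise all v in F(G) do *)
Lemma frag_switches_row G u : largest_selector A L -> G \in An A n ->
  #|frag_set G| <= #|[set v | (u, v) \in frag_switches G]|.
Proof.
move=> ls GA; have sG := An_sym GA.
have n_gt0 : 0 < n := leq_ltn_trans (leq0n u) (ltn_ord u).
have [LG Lmax] := ls n G GA n_gt0.
case uF: (u \in frag_set G).
- apply: leq_trans (subset_leq_card (frag_set_sub sG LG)) _.
  apply: (@leq_trans #|~: comp G u|).
    rewrite [#|~: L G|]cardsCs [#|~: comp G u|]cardsCs !setCK.
    by rewrite leq_sub2l // Lmax // comp_in_comps.
  by apply/subset_leq_card/subsetP => v; rewrite !inE uF andbT.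
- apply/subset_leq_card/subsetP => v vF; rewrite !inE vF orbT andbT /=.
  by apply: contraFN uF; apply: frag_set_closed vF.
Qed.

Lemma frag_switches_card G : largest_selector A L -> G \in An A n ->
  n * #|frag_set G| <= #|frag_switches G|.
Proof.
move=> ls GA; rewrite card_rows -{1}[n]card_ord -sum_nat_const.
by apply: leq_sum => u _; apply: frag_switches_row.
Qed.

Definition middle_comps a G : {set {set 'I_n}} :=
  [set K in comps G | [&& comp_in C G K, a <= #|K| & #|K| <= n - a]].
Definition middle_switches a G : {set 'I_n * 'I_n} :=
  \bigcup_(K in middle_comps a G) cut K.

Lemma middle_switchesP a G p : G \in An A n -> p \in middle_switches a G ->
  ~~ connect (gedge G) p.1 p.2 /\ add_edge G p.1 p.2 \in An A n.
Proof.
move=> GA /bigcupP[K]; rewrite inE => /andP[KG /and3P[CK _ _]].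
case: p => u v; rewrite inE /=; case uK: (u \in K); case vK: (v \in K) => // _.
  exact: switch_from_C CK uK (negbT vK).
have [nc addG] := switch_from_C GA KG CK vK (negbT uK).
by rewrite (connect_symG (An_sym GA)) add_edgeC.
Qed.

Lemma middle_switches_card a G : inB C a G -> a * n <= #|middle_switches a G|.
Proof.
case/exists_inP => K KG /and3P[CK aK Kn].
have Kmid : K \in middle_comps a G by rewrite inE KG CK aK Kn.
apply: leq_trans (subset_leq_card (bigcup_sup K Kmid)).
have cardK : #|K| + #|~: K| = n by rewrite cardsC card_ord.
have aKc : a <= #|~: K| by lia.
by rewrite card_cut -{1}cardK cut_size_bound.
Qed.

End Switches.

Section Bounds.

Variables (A C : gclass) (L : forall n, graph n -> {set 'I_n}).
Hypothesis L_largest : largest_selector A L.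
Hypothesis C_addable : forall k (H : graph k), C H -> bridge_addable A H.
Variable n : nat.
Hypothesis An_gt0 : 0 < #|An A n|.

(* (a) in counting form: n * sum_G frag(G) <= 2 (n - 1) |A_n| by switching,
   so the total of frag over A_n is below 2 |A_n| *)
Lemma frag_sum_lt : \sum_(G in An A n) frag C L G < 2 * #|An A n|.
Proof.
have frag_le G : G \in An A n -> frag C L G <= n.
  move=> GA; rewrite frag_card; last exact: An_sym GA.
  by apply: leq_trans (max_card _) _; rewrite card_ord.
have switches := switching_bound (@An_sym A n) (@frag_switchesP A C L C_addable n).
have frags_le : n * \sum_(G in An A n) frag C L G <=
                \sum_(G in An A n) #|frag_switches C L G|.
  rewrite big_distrr; apply: leq_sum => G GA.
  rewrite frag_card; last exact: An_sym GA.
  by have := frag_switches_card C L_largest GA.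
have sum_le : \sum_(G in An A n) frag C L G <= n * #|An A n|.
  by rewrite mulnC -sum_nat_const leq_sum.
move: (leq_trans frags_le switches) sum_le An_gt0.
by case: n => [|m] /=; nia.
Qed.

(* (b) in counting form: a n |B_n| <= 2 (n - 1) |A_n| by switching, so
   a |B_n| < 2 |A_n| *)
Lemma middle_count_lt a : 0 < a -> 0 < n ->
  #|[set G in An A n | inB C a G]| * a < 2 * #|An A n|.
Proof.
move=> a_gt0 n_gt0.
have switches := switching_bound (@An_sym A n) (@middle_switchesP A C C_addable n a).
have B_le : #|[set G in An A n | inB C a G]| * (a * n) <=
            \sum_(G in An A n) #|middle_switches C a G|.
  rewrite (bigID (@inB C a n)) /= -sum_nat_const.
  rewrite (eq_bigl (fun G => (G \in An A n) && inB C a G)) => [|G]; last by rewrite inE.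
  apply: leq_trans (leq_addr _ _); apply: leq_sum => G /andP[_].
  exact: middle_switches_card.
move: (leq_trans B_le switches) n_gt0 An_gt0.
by case: n => [|m] //=; nia.
Qed.

End Bounds.

Unset Implicit Arguments.
Import GRing.Theory Num.Theory.
Local Open Scope ring_scope.

Theorem lemma5p1 (A C : gclass) (L : forall n, graph n -> {set 'I_n}) :
  largest_selector A L ->
  (forall k (H : graph k), C k H -> is_sgraph H && gconnected H) ->
  (forall k (H : graph k), C k H -> bridge_addable A H) ->
  (forall n : nat, An A n != set0 ->
     (\sum_(G in An A n) ((frag C L G)%:R : rat)) / (#|An A n|%:R) < 2)
  /\
  (forall a n : nat, (0 < a)%N -> (2 * a <= n)%N -> An A n != set0 ->
     (#|[set G in An A n | inB C a G]|%:R : rat) / (#|An A n|%:R) < 2 / a%:R).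
Proof.
move=> L_largest _ C_addable; split.
- move=> n; rewrite -card_gt0 => An_gt0.
  rewrite -natr_sum ltr_pdivrMr ?ltr0n // -natrM ltr_nat.
  exact: frag_sum_lt.
- move=> a n a_gt0 an_le; rewrite -card_gt0 => An_gt0.
  have n_gt0 : (0 < n)%N by apply: leq_trans an_le; rewrite muln_gt0.
  rewrite ltr_pdivrMr ?ltr0n // mulrAC ltr_pdivlMr ?ltr0n // -!natrM ltr_nat.
  exact: middle_count_lt.
Qed.
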